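(* Let $\ell\ge 1$ and $n$ be positive integers and let $\mathcal{C}$ be a family of $(\ell+1)$-subsets of $[n]$. Then $\mathcal{C}$ satisfies the condition (C$_{\ell+1}$): if $C_1, C_2 \in \mathcal{C}$ and $|C_1\cup C_2| = \ell+2$, then every $(\ell+1)$-subset $C_3$ of $C_1\cup C_2$ belongs to $\mathcal{C}$, if and only if there exists an $\ell$-generic matroid on $[n]$ whose family of all $(\ell+1)$-circuits is equal to $\mathcal{C}$.
   Context: $[n]=\{1,\ldots,n\}$. A matroid is $\ell$-generic if it has no circuits of cardinality $i$ for any $i\le\ell$. An $(\ell+1)$-circuit is a circuit of cardinality $\ell+1$. *)

From mathcomp Require Import all_boot.
Set Implicit Arguments. Unset Strict Implicit. Unset Printing Implicit Defensive.

Definition matroid_circuits (T : finType) (Cs : {set {set T}}) : Prop :=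
  [/\ set0 \notin Cs,
      (forall C1 C2, C1 \in Cs -> C2 \in Cs -> C1 \subset C2 -> C1 = C2) &
      (forall C1 C2 e, C1 \in Cs -> C2 \in Cs -> C1 != C2 -> e \in C1 :&: C2 ->
         exists2 C3, C3 \in Cs & C3 \subset (C1 :|: C2) :\ e)].

Definition generic (T : finType) (l : nat) (Cs : {set {set T}}) : Prop :=
  forall C, C \in Cs -> l < #|C|.

Definition circuits_of_size (T : finType) (k : nat) (Cs : {set {set T}}) : {set {set T}} :=
  [set C in Cs | #|C| == k].

Definition cond_C (T : finType) (l : nat) (F : {set {set T}}) : Prop :=
  forall C1 C2, C1 \in F -> C2 \in F -> #|C1 :|: C2| = l.+2 ->
    forall C3 : {set T}, C3 \subset C1 :|: C2 -> #|C3| = l.+1 -> C3 \in F.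

From mathcomp Require Import all_boot zify.

(* Necessity: an (l+1)-subset of C1 :|: C2 is (C1 :|: C2) :\ x for some x; it
   is C1 or C2 unless x lies in both, and then circuit elimination at x puts a
   circuit inside it, which by l-genericity is all of it.
   Sufficiency: adjoin to F, as further circuits, the (l+2)-sets containing no
   member of F (a paving matroid of rank l+1).  Every (l+2)-set then contains a
   circuit, so elimination is only at stake when |C1 :|: C2| = l+2, where it is
   exactly condition (C_{l+1}). *)

Set Implicit Arguments.
Unset Strict Implicit.
Unset Printing Implicit Defensive.

Lemma exists_subset_card (T : finType) (A : {set T}) k :
  k <= #|A| -> exists2 B : {set T}, B \subset A & #|B| = k.
Proof.
move/card_geqP=> [s [us ss sA]]; exists [set x in s].
  by apply/subsetP=> x; rewrite inE => /sA.
by rewrite cardsE (card_uniqP us).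
Qed.

Lemma subset_setD1_card (T : finType) (A B : {set T}) x :
  A \subset B -> x \in B -> x \notin A -> #|B| = #|A|.+1 -> A = B :\ x.
Proof.
move=> sAB xB xA cB; apply/eqP; rewrite eqEcard.
have sABx : A \subset B :\ x.
  apply/subsetP=> y yA; rewrite in_setD1 (subsetP sAB _ yA) andbT.
  by apply: contraNneq xA => <-.
by rewrite sABx /=; move: cB; rewrite (cardsD1 x B) xB; lia.
Qed.

Lemma setD1_of_card (T : finType) (A B : {set T}) :
  A \subset B -> #|B| = #|A|.+1 -> exists2 x, x \in B & A = B :\ x.
Proof.
move=> sAB cB.
have [x xB xA] : exists2 x, x \in B & x \notin A.
  apply/exists_inP; rewrite -negb_forall_in; apply: contraTN isT => /forall_inP sBA.
  have /subset_leq_card : B \subset A by apply/subsetP.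
  by rewrite cB ltnn.
by exists x => //; apply: subset_setD1_card.
Qed.

Lemma generic_circuits_cond_C (T : finType) (l : nat) (Cs : {set {set T}}) :
  matroid_circuits Cs -> generic l Cs -> cond_C l (circuits_of_size l.+1 Cs).
Proof.
move=> [_ _ elimCs] genCs C1 C2; rewrite !inE.
move=> /andP [C1Cs /eqP c1] /andP [C2Cs /eqP c2] cU C3 sC3 c3.
rewrite inE c3 eqxx andbT.
have [|x xU ->] := setD1_of_card sC3; first by rewrite cU c3.
have [x1 | nx1] := boolP (x \in C1); last first.
  by rewrite -(subset_setD1_card (subsetUl C1 C2) xU nx1) // cU c1.
have [x2 | nx2] := boolP (x \in C2); last first.
  by rewrite -(subset_setD1_card (subsetUr C1 C2) xU nx2) // cU c2.
have C12 : C1 != C2 by apply/eqP => E; move: cU; rewrite -E setUid c1 => /n_Sn.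
have [C' C'Cs sC'] := elimCs _ _ _ C1Cs C2Cs C12 (introT setIP (conj x1 x2)).
suff -> : (C1 :|: C2) :\ x = C' by [].
apply/esym/eqP; rewrite eqEcard sC'.
have := cardsD1 x (C1 :|: C2); have := genCs _ C'Cs; rewrite xU cU; lia.
Qed.

Section PavingCircuits.

Variables (T : finType) (l : nat) (F : {set {set T}}).
Hypothesis cardF : forall C, C \in F -> #|C| = l.+1.

Definition paving_circuits : {set {set T}} :=
  F :|: [set S : {set T} | (#|S| == l.+2) && [forall C in F, ~~ (C \subset S)]].

Local Notation Cs := paving_circuits.

Lemma in_paving_circuits S :
  (S \in Cs) = (S \in F) || (#|S| == l.+2) && [forall C in F, ~~ (C \subset S)].
Proof. by rewrite !inE. Qed.

Lemma paving_circuits_generic : generic l Cs.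
Proof.
by move=> S; rewrite in_paving_circuits => /orP [/cardF -> | /andP [/eqP -> _]].
Qed.

Lemma paving_circuits_small S : S \in Cs -> #|S| = l.+1 -> S \in F.
Proof. by rewrite in_paving_circuits => /orP [// | /andP [/eqP -> _]] /esym /n_Sn. Qed.

Lemma circuits_of_size_paving : circuits_of_size l.+1 Cs = F.
Proof.
apply/setP=> S; rewrite inE; apply/andP/idP => [[SCs /eqP] | SF].
  exact: paving_circuits_small.
by rewrite in_paving_circuits SF cardF.
Qed.

Lemma paving_circuits_cover (U : {set T}) :
  l.+2 <= #|U| -> exists2 C, C \in Cs & C \subset U.
Proof.
move=> /exists_subset_card [S sSU cS].
have [freeS | ] := boolP [forall C in F, ~~ (C \subset S)].
  by exists S => //; rewrite in_paving_circuits cS eqxx freeS orbT.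
rewrite negb_forall_in => /exists_inP [C CF /negPn sCS].
by exists C; [rewrite inE CF | apply: subset_trans sCS sSU].
Qed.

Lemma paving_circuits_clutter C1 C2 :
  C1 \in Cs -> C2 \in Cs -> C1 \subset C2 -> C1 = C2.
Proof.
move=> C1Cs C2Cs sC12; apply/eqP; rewrite eqEcard sC12 /=.
have := paving_circuits_generic C1Cs.
move: C2Cs; rewrite in_paving_circuits.
case/orP=> [/cardF -> // | /andP [/eqP -> /forall_inP freeC2]].
by move: C1Cs; rewrite in_paving_circuits => /orP [/freeC2 | /andP [/eqP -> _]]; rewrite ?sC12.
Qed.

Lemma paving_circuits_card_ltU C1 C2 :
  C1 \in Cs -> C2 \in Cs -> C1 != C2 -> #|C1| < #|C1 :|: C2|.
Proof.
move=> C1Cs C2Cs C12; apply: proper_card; rewrite properEneq subsetUl andbT.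
apply: contra_neq C12 => defU; apply/esym/paving_circuits_clutter => //.
by rewrite defU subsetUr.
Qed.

Hypothesis condF : cond_C l F.

Lemma paving_circuits_elim C1 C2 e :
  C1 \in Cs -> C2 \in Cs -> C1 != C2 -> e \in C1 :&: C2 ->
  exists2 C3, C3 \in Cs & C3 \subset (C1 :|: C2) :\ e.
Proof.
move=> C1Cs C2Cs C12 /setIP [e1 _].
have lt1 := paving_circuits_card_ltU C1Cs C2Cs C12.
have := paving_circuits_card_ltU C2Cs C1Cs; rewrite eq_sym setUC => /(_ C12) lt2.
have g1 := paving_circuits_generic C1Cs; have g2 := paving_circuits_generic C2Cs.
have cUe : #|C1 :|: C2| = #|(C1 :|: C2) :\ e|.+1.
  by rewrite (cardsD1 e (C1 :|: C2)) in_setU e1.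
have [big | small] := leqP l.+3 #|C1 :|: C2|.
  by apply: paving_circuits_cover; lia.
exists ((C1 :|: C2) :\ e) => //; rewrite inE; apply/orP; left.
have F1 : C1 \in F by apply: paving_circuits_small => //; lia.
have F2 : C2 \in F by apply: paving_circuits_small => //; lia.
by apply: (condF F1 F2); [lia | exact: subsetDl | lia].
Qed.

Lemma paving_circuits_matroid : matroid_circuits Cs.
Proof.
split; [| exact: paving_circuits_clutter | exact: paving_circuits_elim].
by apply: contraT => /negbNE /paving_circuits_generic; rewrite cards0.
Qed.

End PavingCircuits.

Theorem lemma2p2 (l n : nat) (hl : 1 <= l) (hn : 0 < n)
  (F : {set {set 'I_n}}) (hF : forall C, C \in F -> #|C| = l.+1) :
  cond_C l F <->
  exists Cs : {set {set 'I_n}},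
    [/\ matroid_circuits Cs, generic l Cs & circuits_of_size l.+1 Cs = F].
Proof.
split=> [condF | [Cs [matCs genCs <-]]].
  exists (paving_circuits l F); split.
  - exact: paving_circuits_matroid.
  - exact: paving_circuits_generic.
  - exact: circuits_of_size_paving.
exact: generic_circuits_cond_C.
Qed.
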